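(* Let $\mathcal F\subseteq\mathcal O(A)$ be a conservative symmetric clone and $n\ge2$ a natural number. (1) If $\mathcal F$ contains an $n$-ary function $f$ that is not a projection but whose restriction to $A^n_{<n}$ coincides with the restriction of some projection $e^n_i$, then $\mathcal F$ satisfies $\Delta^s_n$. (2) If $\mathcal F$ contains a $\partial$-function, then $\mathcal F$ satisfies $\Delta^\partial$. (3) If $\mathcal F$ contains an $\ell$-function, then $\mathcal F$ satisfies $\Delta^s_3$.
   Context: $\mathcal O(A)=\bigcup_{n<\omega}A^{A^n}$; $\mathcal F_{[n]}=\mathcal F\cap A^{A^n}$; $S_A$ the permutations of $A$. Elements of $A^n$ are $\mathbf x=x_0\dots x_{n-1}$, $\mathrm{ran}\,\mathbf x$ the set of entries, $A^n_k=\{\mathbf x:|\mathrm{ran}\,\mathbf x|=k\}$, $A^n_{<n}=\bigcup_{k<n}A^n_k$; projections $e^n_i(\mathbf x)=x_i$. A clone with carrier $A$ is a subset of $\mathcal O(A)$ containing all projections and closed under composition; conservative if $f(\mathbf a)\in\mathrm{ran}\,\mathbf a$ for all members; symmetric if $f_\sigma(\mathbf a)=\sigma^{-1}(f(\sigma(\mathbf a)))$ is a member for each member $f$ and $\sigma\in S_A$. A $\partial$-function is $\partial\in\mathcal O(A)_{[3]}$ with $\partial(xxy)=\partial(xyx)=\partial(yxx)=x$ for all $x,y\in A$; an $\ell$-function is $\ell\in\mathcal O(A)_{[3]}$ with $\ell(x,y,y)=\ell(y,x,y)=\ell(y,y,x)=x$ for all $x,y\in A$. $\Delta^s_n$: there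 is $i<n$ such that for every $\mathbf a\in A^n_n$ and $a\in\mathrm{ran}\,\mathbf a$ there is $s\in\mathcal F_{[n]}$ with $s(\mathbf a)=a$ and $s(\mathbf x)=x_i$ for all $\mathbf x\in A^n_{<n}$. $\Delta^\partial$: for every $\mathbf a\in A^3_3$ and $a\in\mathrm{ran}\,\mathbf a$ there is a $\partial$-function $\partial\in\mathcal F$ with $\partial(\mathbf a)=a$. *)

From mathcomp Require Import all_boot.
Set Implicit Arguments. Unset Strict Implicit. Unset Printing Implicit Defensive.

Definition op (A : Type) (n : nat) := ('I_n -> A) -> A.

Definition opset (A : Type) := forall n : nat, op A n -> Prop.

Definition proj (A : Type) (n : nat) (i : 'I_n) : op A n := fun x => x i.

(* x in A^n_n  iff  |ran x| = n  iff  x is injective;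
   x in A^n_{<n} iff x is not injective. *)
Definition full_tuple (A : Type) (n : nat) (x : 'I_n -> A) : Prop := injective x.

Definition in_ran (A : Type) (n : nat) (a : A) (x : 'I_n -> A) : Prop :=
  exists i : 'I_n, a = x i.

Definition is_clone (A : Type) (F : opset A) : Prop :=
  (forall n (i : 'I_n), F n (@proj A n i)) /\
  (forall n m (f : op A n) (g : 'I_n -> op A m),
      F n f -> (forall i, F m (g i)) -> F m (fun x => f (fun i => g i x))).

Definition conservative (A : Type) (F : opset A) : Prop :=
  forall n (f : op A n), F n f -> forall x, in_ran (f x) x.

Definition symmetric_clone (A : Type) (F : opset A) : Prop :=
  forall (sigma sigma' : A -> A), cancel sigma sigma' -> cancel sigma' sigma ->
  forall n (f : op A n), F n f -> F n (fun x => sigma' (f (fun i => sigma (x i)))).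

Definition trip (A : Type) (x y z : A) : 'I_3 -> A :=
  fun i => match val i with 0 => x | 1 => y | _ => z end.

Definition partial_fun (A : Type) (d : op A 3) : Prop :=
  forall x y : A, d (trip x x y) = x /\ d (trip x y x) = x /\ d (trip y x x) = x.

Definition ell_fun (A : Type) (l : op A 3) : Prop :=
  forall x y : A, l (trip x y y) = x /\ l (trip y x y) = x /\ l (trip y y x) = x.

Definition Delta_s (A : Type) (F : opset A) (n : nat) : Prop :=
  exists i : 'I_n, forall a : 'I_n -> A, full_tuple a ->
    forall b : A, in_ran b a ->
      exists s : op A n, F n s /\ s a = b /\
        (forall x : 'I_n -> A, ~ full_tuple x -> s x = x i).

Definition Delta_partial (A : Type) (F : opset A) : Prop :=
  forall a : 'I_3 -> A, full_tuple a ->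
    forall b : A, in_ran b a ->
      exists d : op A 3, F 3 d /\ partial_fun d /\ d a = b.

From mathcomp Require Import all_boot fingroup perm.
From Stdlib Require Import Classical ClassicalEpsilon FunctionalExtensionality.
Set Implicit Arguments. Unset Strict Implicit. Unset Printing Implicit Defensive.

(* Symmetry makes F closed under conjugation by permutations of A, and every
   clone is closed under permuting arguments.  As the permutations of A act
   transitively on injective n-tuples, a member f with f x = x k at an
   injective x can be transported to any injective a; permuting its arguments
   by the transposition (k m) first makes it send a to a m.  Both operations
   preserve agreeing with a projection off the injective tuples (up to moving
   the index) and being a majority (= partial) function, which gives (1) and
   (2).  For (3), if l a = a k at an injective a, substituting l itself for
   the j-th argument of l, j <> k, yields a member that agrees with e_j off
   injective tuples but moves a j, so (1) applies. *)

Section Swap.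
Variable A : Type.

Definition swap (u v w : A) : A :=
  if excluded_middle_informative (w = u) then v
  else if excluded_middle_informative (w = v) then u else w.

Lemma swapL u v : swap u v u = v.
Proof. by rewrite /swap; case: excluded_middle_informative. Qed.

Lemma swapR u v : swap u v v = u.
Proof.
rewrite /swap; destruct (excluded_middle_informative (v = u)) => //.
by destruct (excluded_middle_informative (v = v)).
Qed.

Lemma swapD u v w : w <> u -> w <> v -> swap u v w = w.
Proof.
rewrite /swap => wu wv.
by destruct (excluded_middle_informative (w = u)); last
  destruct (excluded_middle_informative (w = v)).
Qed.

Lemma swapK u v : involutive (swap u v).
Proof.
move=> w; case: (classic (w = u)) => [->|wu]; first by rewrite swapL swapR.
case: (classic (w = v)) => [->|wv]; first by rewrite swapR swapL.
by rewrite !swapD.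
Qed.

Lemma exists_perm_mapping n (a x : 'I_n -> A) : injective a -> injective x ->
  exists sg sg' : A -> A, [/\ cancel sg sg', cancel sg' sg & forall j, sg (a j) = x j].
Proof.
move=> inj_a inj_x.
suff /(_ n (leqnn n)) [sg [sg' [sgK sg'K sg_a]]] : forall k, k <= n ->
    exists sg sg' : A -> A,
    [/\ cancel sg sg', cancel sg' sg & forall j : 'I_n, j < k -> sg (a j) = x j].
  by exists sg, sg'; split=> // j; apply: sg_a.
elim=> [|k IHk] lt_k_n; first by exists id, id.
have [sg [sg' [sgK sg'K sg_a]]] := IHk (ltnW lt_k_n).
pose jk : 'I_n := Ordinal lt_k_n.
pose s := swap (sg (a jk)) (x jk).
exists (s \o sg), (sg' \o s); split=> [w|w|j] /=.
- by rewrite /s swapK sgK.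
- by rewrite /s sg'K swapK.
rewrite ltnS leq_eqVlt => /orP[/eqP j_k|lt_j_k].
  by rewrite (_ : j = jk) /s ?swapL //; apply: val_inj.
rewrite sg_a // /s swapD // => [/esym|/inj_x j_jk].
  by rewrite -sg_a // => /(can_inj sgK)/inj_a j_jk; rewrite -j_jk ltnn in lt_j_k.
by rewrite j_jk ltnn in lt_j_k.
Qed.

End Swap.

Lemma clone_minor A (F : opset A) n (p : 'I_n -> 'I_n) (f : op A n) :
  is_clone F -> F n f -> F n (fun y => f (fun j => y (p j))).
Proof. by case=> F_proj F_comp Ff; apply: (F_comp _ _ _ (fun j => proj (p j)) Ff). Qed.

Lemma clone_replace_arg A (F : opset A) n (j : 'I_n) (f g : op A n) :
  is_clone F -> F n f -> F n g ->
  F n (fun y => f (fun i => if i == j then g y else y i)).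
Proof.
case=> F_proj F_comp Ff Fg.
have := F_comp _ _ f (fun i => if i == j then g else proj i) Ff.
have -> : (fun y => f (fun i => (if i == j then g else proj i) y)) =
          (fun y => f (fun i => if i == j then g y else y i)).
  by apply: functional_extensionality => y; congr f;
     apply: functional_extensionality => i; case: (i == j).
by apply=> i; case: (i == j).
Qed.

Definition proj_off_full A n (f : op A n) (i : 'I_n) :=
  forall y, ~ full_tuple y -> f y = y i.

Definition majority A n (f : op A n) :=
  forall y (u v : 'I_n), u != v -> y u = y v -> f y = y u.

Section Relabel.
Variables (A : Type) (n : nat) (sg sg' : A -> A) (p : {perm 'I_n}).
Hypotheses (sgK : cancel sg sg') (sg'K : cancel sg' sg).

Definition relabel (f : op A n) : op A n := fun y => sg' (f (fun j => sg (y (p j)))).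

Lemma relabel_in_clone (F : opset A) f :
  is_clone F -> symmetric_clone F -> F n f -> F n (relabel f).
Proof.
move=> F_clone F_sym Ff.
exact: (F_sym _ _ sgK sg'K _ _ (clone_minor p F_clone Ff)).
Qed.

Lemma relabel_full y : full_tuple (fun j => sg (y (p j))) -> full_tuple y.
Proof.
move=> inj_y u v yuv; apply: (can_inj (permKV p)); apply: inj_y.
by rewrite !permKV yuv.
Qed.

Lemma relabel_proj_off_full f i : proj_off_full f i -> proj_off_full (relabel f) (p i).
Proof.
by move=> f_proj y y_nfull; rewrite /relabel f_proj ?sgK // => /relabel_full.
Qed.

Lemma relabel_majority f : majority f -> majority (relabel f).
Proof.
move=> f_maj y u v uv yuv; rewrite /relabel (f_maj _ ((p^-1)%g u) ((p^-1)%g v)) /=.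
- by rewrite permKV sgK.
- by apply: contra uv => /eqP/perm_inj ->.
- by rewrite !permKV yuv.
Qed.

End Relabel.

Lemma exists_relabel_value A n (f : op A n) (a x : 'I_n -> A) k m :
  full_tuple a -> full_tuple x -> f x = x k ->
  exists sg sg' : A -> A,
    [/\ cancel sg sg', cancel sg' sg & relabel sg sg' (tperm k m) f a = a m].
Proof.
move=> inj_a inj_x fx.
have inj_ap : injective (fun j => a (tperm k m j)) by move=> u v /inj_a/perm_inj.
have [sg [sg' [sgK sg'K sg_a]]] := exists_perm_mapping inj_ap inj_x.
exists sg, sg'; split=> //; rewrite /relabel.
have -> : (fun j => sg (a (tperm k m j))) = x by apply: functional_extensionality.
by rewrite fx -sg_a sgK tpermL.
Qed.

Local Notation i1 := (@Ordinal 3 1 isT).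
Local Notation i2 := (@Ordinal 3 2 isT).

Lemma trip_eta A (t : 'I_3 -> A) : t = trip (t ord0) (t i1) (t i2).
Proof.
by apply: functional_extensionality => -[[|[|[|j]]] lt_j3] //=; congr t; apply: val_inj.
Qed.

Lemma partial_funP A (d : op A 3) : partial_fun d <-> majority d.
Proof.
split=> [d_part t u v | d_maj x y]; last first.
  by do !split; [apply: (d_maj _ ord0 i1) | apply: (d_maj _ ord0 i2) | apply: (d_maj _ i1 i2)].
rewrite (trip_eta t); move: (t ord0) (t i1) (t i2) => x y z.
case: u v => [[|[|[|u]]] ?] [[|[|[|v]]] ?] //= _ E; rewrite /trip /= in E; subst;
  by [apply: (proj1 (d_part _ _)) | apply: (proj1 (proj2 (d_part _ _)))
     | apply: (proj2 (proj2 (d_part _ _)))].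
Qed.

Lemma trip_nonfull A (x y z : A) :
  ~ full_tuple (trip x y z) -> [\/ x = y, x = z | y = z].
Proof.
move=> nfull; apply: NNPP => neq; apply: nfull.
case=> [[|[|[|u]]] ?] [[|[|[|v]]] ?] //=; rewrite /trip /=;
  first [by move=> _; apply: val_inj
        | move=> E; exfalso; apply: neq; rewrite E;
          by [constructor 1 | constructor 2 | constructor 3]].
Qed.

Definition subst_self A n (f : op A n) (j : 'I_n) : op A n :=
  fun t => f (fun i => if i == j then f t else t i).

Section Ell.
Variables (A : Type) (l : op A 3).
Hypothesis l_ell : ell_fun l.

Let ell1 x y : l (trip x y y) = x. Proof. by case: (l_ell x y). Qed.
Let ell2 x y : l (trip y x y) = x. Proof. by case: (l_ell x y) => _ []. Qed.
Let ell3 x y : l (trip y y x) = x. Proof. by case: (l_ell x y) => _ []. Qed.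

Lemma ell_subst_self_proj_off_full j : proj_off_full (subst_self l j) j.
Proof.
move=> t; rewrite [t]trip_eta /subst_self; move: (t ord0) (t i1) (t i2) => x y z.
move=> nfull; case: (trip_nonfull nfull) => <-; rewrite ?ell1 ?ell2 ?ell3.
all: case: j => [[|[|[|j]]] ?] //.
all: rewrite [X in l X]trip_eta /= /trip /=.
all: by [apply: ell1 | apply: ell2 | apply: ell3].
Qed.

Lemma ell_subst_self_third t j k :
  l t = t k -> j != k -> exists2 w, w != j & subst_self l j t = t w.
Proof.
move=> ltk; rewrite /subst_self ltk [t]trip_eta; move: (t ord0) (t i1) (t i2) => x y z.
case: j k {ltk} => [[|[|[|j]]] ?] [[|[|[|k]]] ?] //= _; rewrite [X in l X]trip_eta /=;
  [exists i2 | exists i1 | exists i2 | exists ord0 | exists i1 | exists ord0] => //.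
all: rewrite /trip /=; by [apply: ell1 | apply: ell2 | apply: ell3].
Qed.

End Ell.

Section Delta.
Variable A : Type.
Variable F : opset A.
Arguments F : clear implicits.
Hypotheses (F_clone : is_clone F) (F_cons : conservative F) (F_sym : symmetric_clone F).

Lemma Delta_s_of_proj_off_full n (f : op A n) i :
  F n f -> proj_off_full f i -> (exists x, f x <> x i) -> Delta_s F n.
Proof.
move=> Ff f_proj [x fx_ne]; exists i => a inj_a _ [m ->].
have inj_x : full_tuple x by apply: NNPP => /f_proj.
have [k fx] := F_cons Ff x.
have ik : i != k by apply: contraPneq fx_ne => ->.
have [-> | mi] := eqVneq m i; first by exists (proj i); case: F_clone.
have [sg [sg' [sgK sg'K hit]]] := exists_relabel_value m inj_a inj_x fx.
exists (relabel sg sg' (tperm k m) f); split; first exact: relabel_in_clone.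
split=> // y.
by move /(relabel_proj_off_full (tperm k m) sgK f_proj); rewrite tpermD // eq_sym.
Qed.

Lemma Delta_partial_of_partial_fun d : F 3 d -> partial_fun d -> Delta_partial F.
Proof.
move=> Fd /partial_funP d_maj a inj_a _ [m ->].
have [k dk] := F_cons Fd a.
have [sg [sg' [sgK sg'K hit]]] := exists_relabel_value m inj_a inj_a dk.
exists (relabel sg sg' (tperm k m) d); split; first exact: relabel_in_clone.
by split=> //; apply/partial_funP/relabel_majority.
Qed.

Lemma Delta_s_of_ell_fun l : F 3 l -> ell_fun l -> Delta_s F 3.
Proof.
move=> Fl l_ell.
have [[a inj_a] | no_full] := classic (exists a : 'I_3 -> A, full_tuple a); last first.
  by exists ord0 => a inj_a; case: no_full; exists a.
have [k lak] := F_cons Fl a.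
have [j jk] : exists j : 'I_3, j != k.
  by exists (if k == ord0 then i1 else ord0); case: (eqVneq k ord0) => [->|]; rewrite // eq_sym.
have [w wj sa] := ell_subst_self_third l_ell lak jk.
apply: (@Delta_s_of_proj_off_full _ (subst_self l j) j).
- exact: (clone_replace_arg j F_clone Fl Fl).
- exact: ell_subst_self_proj_off_full.
- by exists a; rewrite sa => /inj_a/eqP; rewrite (negbTE wj).
Qed.

End Delta.

Theorem mainTheorem17 (A : Type) (F : opset A) (n : nat) :
  is_clone F -> conservative F -> symmetric_clone F -> 2 <= n ->
  ((exists f : op A n, F n f /\
      (forall j : 'I_n, ~ (forall x, f x = @proj A n j x)) /\
      (exists i : 'I_n, forall x : 'I_n -> A, ~ full_tuple x -> f x = @proj A n i x))
     -> Delta_s F n) /\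
  ((exists d : op A 3, F 3 d /\ partial_fun d) -> Delta_partial F) /\
  ((exists l : op A 3, F 3 l /\ ell_fun l) -> Delta_s F 3).
Proof.
move=> F_clone F_cons F_sym _; split; [|split].
- move=> [f [Ff [not_proj [i f_proj]]]].
  apply: (Delta_s_of_proj_off_full F_clone F_cons F_sym Ff f_proj).
  by have [x fx] := not_all_ex_not _ _ (not_proj i); exists x.
- by move=> [d [Fd d_part]]; apply: Delta_partial_of_partial_fun Fd d_part.
- by move=> [l [Fl l_ell]]; apply: Delta_s_of_ell_fun Fl l_ell.
Qed.
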